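(* Let $t\ge2$ be an integer and let $\chi_t$ be as in the context. Then: (i) for every integer $n$ with $\chi_t(n)\neq 0$, the number $\frac{n^2-(2^{t+1}-3)^2}{3\cdot 2^{t+2}}$ is an integer; and (ii) for each root of unity $\zeta$, the function $n\mapsto \zeta^{\frac{n^2-(2^{t+1}-3)^2}{3\cdot 2^{t+2}}}\chi_t(n)$ (taken to be $0$ when $\chi_t(n)=0$) is periodic and has mean value zero.
   Context: Define $\chi_t:\mathbb{Z}\to\{0,\pm1\}$, periodic modulo $3\cdot2^{t+1}$, by $\chi_t(n)=1$ if $n\equiv 2^{t+1}-3$ or $3+2^{t+2}\pmod{3\cdot 2^{t+1}}$, $\chi_t(n)=-1$ if $n\equiv 2^{t+1}+3$ or $2^{t+2}-3\pmod{3\cdot2^{t+1}}$, and $\chi_t(n)=0$ otherwise. A periodic function has mean value zero if its sum over a full period is zero. *)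

From mathcomp Require Import all_boot all_order all_algebra all_field.
Set Implicit Arguments. Unset Strict Implicit. Unset Printing Implicit Defensive.
Import Order.TTheory GRing.Theory Num.Theory.
Local Open Scope ring_scope.

Definition chi (t : nat) (n : int) : int :=
  let M : int := 3 * 2 ^+ t.+1 in
  if ((n == 2 ^+ t.+1 - 3 %[mod M])%Z || (n == 3 + 2 ^+ t.+2 %[mod M])%Z) then 1
  else if ((n == 2 ^+ t.+1 + 3 %[mod M])%Z || (n == 2 ^+ t.+2 - 3 %[mod M])%Z)
  then -1 else 0.

(* the exponent (n^2 - (2^(t+1)-3)^2) / (3 * 2^(t+2)) (Euclidean quotient;
   exact whenever chi t n <> 0, by part (i)) *)
Definition expo (t : nat) (n : int) : int :=
  ((n ^+ 2 - (2 ^+ t.+1 - 3) ^+ 2) %/ (3 * 2 ^+ t.+2))%Z.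

Definition twisted (t : nat) (zeta : algC) (n : int) : algC :=
  if chi t n == 0 then 0 else zeta ^ (expo t n) * (chi t n)%:~R.

From mathcomp Require Import all_boot all_order all_algebra all_field.
From mathcomp Require Import ring zify.

(* Write w = 2^t.  Modulo 6w, chi_t is 1 on the classes of 2w-3 and 4w+3 and
   -1 on those of 2w+3 and 4w-3; every such n has n^2 = (2w-3)^2 modulo 12w,
   which is (i), and if zeta^k = 1 the twisted function has period 12wk.
   For (ii) write k = 2^c m with m odd and choose L = 1 mod 3m and
   L = -1 mod 2^(t+c+2).  Multiplication by L exchanges the classes where chi_t
   is 1 and -1, and since 12wk divides L^2 - 1 it fixes the exponent modulo k
   and is an involution of Z/12wk.  Hence the sum over a period is its own
   negative; the sum over any other period P vanishes because P copies of it
   make up 12wk copies of the first. *)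

Set Implicit Arguments.
Unset Strict Implicit.
Unset Printing Implicit Defensive.
Import Order.TTheory GRing.Theory Num.Theory.
Local Open Scope ring_scope.

Lemma dvdz_sub_shift (d m n r : int) :
  (d %| m - n)%Z -> (d %| m - r)%Z = (d %| n - r)%Z.
Proof.
move=> dmn; have -> : m - r = (m - n) + (n - r) by ring.
by rewrite rpredDl.
Qed.

Lemma dvdz_small (d x : int) : 0 < x < d -> ~~ (d %| x)%Z.
Proof. by move=> x_bd; rewrite dvdzE gtnNdvd //; lia. Qed.

Lemma dvdz_sqrB (d m n : int) :
  (2 %| d)%Z -> (d %| m - n)%Z -> (2 * d %| m ^+ 2 - n ^+ 2)%Z.
Proof.
move=> /dvdzP[a ->] /dvdzP[b mn].
have -> : m = n + b * (a * 2) by rewrite -mn; ring.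
by apply/dvdzP; exists (b * (n + a * b)); ring.
Qed.

Lemma coprimez_exists_pm1 (A B : int) :
  coprimez A B -> exists L, (A %| L - 1)%Z /\ (B %| L + 1)%Z.
Proof.
case/coprimezP=> [[u v] /= uv1]; exists (v * B - u * A).
rewrite -[in _ - 1]uv1 -[in _ + 1]uv1.
by split; apply/dvdzP; [exists (- 2 * u) | exists (2 * v)]; ring.
Qed.

Lemma exprz_congr_unity (F : fieldType) (z : F) (k : nat) (x y : int) :
  (0 < k)%N -> z ^+ k = 1 -> (k%:Z %| x - y)%Z -> z ^ x = z ^ y.
Proof.
move=> k_gt0 zk /dvdzP[q xy].
have z_neq0 : z != 0 by move: (oner_neq0 F); rewrite -zk expf_eq0 k_gt0.
have -> : x = q * k%:Z + y by rewrite -xy; ring.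
by rewrite expfzDr // [q * _]mulrC -exprz_exp -exprnP zk exp1rz mul1r.
Qed.

Definition chi_plus (w n : int) : bool :=
  (6 * w %| n - (2 * w - 3))%Z || (6 * w %| n - (4 * w + 3))%Z.

Definition chi_minus (w n : int) : bool :=
  (6 * w %| n - (2 * w + 3))%Z || (6 * w %| n - (4 * w - 3))%Z.

Definition chiw (w n : int) : int :=
  if chi_plus w n then 1 else if chi_minus w n then -1 else 0.

Definition expw (w n : int) : int :=
  ((n ^+ 2 - (2 * w - 3) ^+ 2) %/ (12 * w))%Z.

Lemma chiw_congr (w m n : int) : (6 * w %| m - n)%Z -> chiw w m = chiw w n.
Proof.
by move=> wmn; rewrite /chiw /chi_plus /chi_minus !(dvdz_sub_shift _ wmn).
Qed.

Lemma chi_plus_minus_disjoint (w n : int) :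
  1 < w -> chi_plus w n -> chi_minus w n -> False.
Proof.
move=> w_gt1.
have apart a b : 0 < b - a < 6 * w ->
    (6 * w %| n - a)%Z -> (6 * w %| n - b)%Z -> False.
  move=> ab_bd na nb; have := rpredB na nb.
  have -> : n - a - (n - b) = b - a by ring.
  by rewrite (negPf (dvdz_small ab_bd)).
by case/orP=> [na|na] /orP[nb|nb]; [apply: apart na nb | apply: apart na nb
  | apply: apart nb na | apply: apart nb na]; lia.
Qed.

Lemma dvdz_expw_num (w n : int) :
  chiw w n != 0 -> (12 * w %| n ^+ 2 - (2 * w - 3) ^+ 2)%Z.
Proof.
have from_residue r q : (6 * w %| n - r)%Z ->
    r ^+ 2 - (2 * w - 3) ^+ 2 = q * (12 * w) ->
    (12 * w %| n ^+ 2 - (2 * w - 3) ^+ 2)%Z.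
  move=> nr rq; have -> : n ^+ 2 - (2 * w - 3) ^+ 2
    = (n ^+ 2 - r ^+ 2) + (r ^+ 2 - (2 * w - 3) ^+ 2) by ring.
  apply: rpredD; last by apply/dvdzP; exists q.
  have -> : 12 * w = 2 * (6 * w) by ring.
  by apply: dvdz_sqrB nr; apply/dvdzP; exists (3 * w); ring.
rewrite /chiw /chi_plus /chi_minus.
case: (boolP (6 * w %| n - (2 * w - 3))%Z) => [nr _|_] /=.
  by apply: (from_residue _ 0 nr); ring.
case: (boolP (6 * w %| n - (4 * w + 3))%Z) => [nr _|_] /=.
  by apply: (from_residue _ (w + 3) nr); ring.
case: (boolP (6 * w %| n - (2 * w + 3))%Z) => [nr _|_] /=.
  by apply: (from_residue _ 2 nr); ring.
case: (boolP (6 * w %| n - (4 * w - 3))%Z) => [nr _|_] //=.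
by apply: (from_residue _ (w - 1) nr); ring.
Qed.

Lemma expwK (w n : int) :
  chiw w n != 0 -> expw w n * (12 * w) = n ^+ 2 - (2 * w - 3) ^+ 2.
Proof. by move/dvdz_expw_num; apply: divzK. Qed.

Section SignFlip.

Variables (w L : int).
Hypotheses (w_gt1 : 1 < w) (coprime_3_2w : coprimez 3 (2 * w)).
Hypotheses (L_plus1 : (2 * w %| L + 1)%Z) (L_minus1 : (3 %| L - 1)%Z).

Lemma dvdz_mul_flip n c d : (2 * w %| c + d)%Z -> (3 %| c - d)%Z ->
  (6 * w %| L * n - c)%Z = (6 * w %| n - d)%Z.
Proof.
move=> cd2 cd3; have -> : 6 * w = 3 * (2 * w) by ring.
rewrite Gauss_dvdz // [in RHS]Gauss_dvdz //; congr (_ && _).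
  have -> : L * n - c = (L - 1) * n + (n - d) - (c - d) by ring.
  by rewrite rpredBr // rpredDl // dvdz_mulr.
have -> : L * n - c = (L + 1) * n + - (n - d) - (c + d) by ring.
by rewrite rpredBr // rpredDl ?rpredN // dvdz_mulr.
Qed.

Lemma chi_plus_mul n : chi_plus w (L * n) = chi_minus w n.
Proof.
rewrite /chi_plus /chi_minus; congr (_ || _).
all: apply: dvdz_mul_flip; apply/dvdzP.
all: [> exists 2 | exists (-2) | exists 4 | exists 2]; ring.
Qed.

Lemma chi_minus_mul n : chi_minus w (L * n) = chi_plus w n.
Proof.
rewrite /chi_plus /chi_minus; congr (_ || _).
all: apply: dvdz_mul_flip; apply/dvdzP.
all: [> exists 2 | exists 2 | exists 4 | exists (-2)]; ring.
Qed.

Lemma chiw_mul n : chiw w (L * n) = - chiw w n.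
Proof.
rewrite /chiw chi_plus_mul chi_minus_mul.
case: (boolP (chi_plus w n)) => np; case: (boolP (chi_minus w n)) => nm;
  rewrite /= ?opprK ?oppr0 //.
by case: (chi_plus_minus_disjoint w_gt1 np nm).
Qed.

End SignFlip.

Definition twistedw (w : int) (zeta : algC) (n : int) : algC :=
  if chiw w n == 0 then 0 else zeta ^ expw w n * (chiw w n)%:~R.

Section Twisted.

Variables (w : int) (zeta : algC) (k : nat).
Hypotheses (w_neq0 : w != 0) (k_gt0 : (0 < k)%N) (zeta_k : zeta ^+ k = 1).

Lemma exprz_expw_congr m n : chiw w m != 0 -> chiw w n != 0 ->
  (12 * w * k%:Z %| m ^+ 2 - n ^+ 2)%Z -> zeta ^ expw w m = zeta ^ expw w n.
Proof.
move=> chi_m chi_n /dvdzP[q mn]; apply: (exprz_congr_unity k_gt0 zeta_k).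
apply/dvdzP; exists q; apply: (@mulIf _ (12 * w)); first by rewrite mulf_neq0.
rewrite mulrBl !expwK //.
transitivity (m ^+ 2 - n ^+ 2); first by ring.
by rewrite mn; ring.
Qed.

Lemma twistedw_periodic n :
  twistedw w zeta (n + 12 * w * k%:Z) = twistedw w zeta n.
Proof.
have chi_per : chiw w (n + 12 * w * k%:Z) = chiw w n.
  by apply: chiw_congr; apply/dvdzP; exists (2 * k%:Z); ring.
rewrite /twistedw chi_per; case: eqP => // /eqP chi_n; congr (_ * _).
apply: exprz_expw_congr; rewrite ?chi_per //.
by apply/dvdzP; exists (2 * n + 12 * w * k%:Z); ring.
Qed.

Lemma twistedw_mul L n : 1 < w -> coprimez 3 (2 * w) ->
  (2 * w %| L + 1)%Z -> (3 %| L - 1)%Z -> (12 * w * k%:Z %| L ^+ 2 - 1)%Z ->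
  twistedw w zeta (L * n) = - twistedw w zeta n.
Proof.
move=> w_gt1 cop L_plus1 L_minus1 L_sqr.
have chi_Ln := chiw_mul w_gt1 cop L_plus1 L_minus1 n.
rewrite /twistedw chi_Ln oppr_eq0.
case: eqP => [_|/eqP chi_n]; first by rewrite oppr0.
rewrite rmorphN mulrN; congr (- (_ * _)).
apply: exprz_expw_congr; rewrite ?chi_Ln ?oppr_eq0 //.
have -> : (L * n) ^+ 2 - n ^+ 2 = (L ^+ 2 - 1) * n ^+ 2 by ring.
by rewrite dvdz_mulr.
Qed.

End Twisted.

Section PeriodicSums.

Variables (R : numDomainType) (f : int -> R).

Lemma periodic_addMr (N : nat) : (forall n, f (n + N%:Z) = f n) ->
  forall n q, f (n + q * N%:Z) = f n.
Proof.
move=> fN.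
have f_addnMr c m : f (m + c%:Z * N%:Z) = f m.
  elim: c m => [|c IH] m; first by rewrite mul0r addr0.
  have -> : m + c.+1%:Z * N%:Z = m + c%:Z * N%:Z + N%:Z by rewrite intS; ring.
  by rewrite fN IH.
move=> n [c|c]; first exact: f_addnMr.
rewrite -(f_addnMr c.+1 (n + Negz c * N%:Z)); congr f; rewrite NegzE; ring.
Qed.

Lemma periodic_modz (N : nat) : (forall n, f (n + N%:Z) = f n) ->
  forall n, f n = f (n %% N%:Z)%Z.
Proof. by move=> fN n; rewrite {1}(divz_eq n N) addrC periodic_addMr. Qed.

Lemma sum_periodic_mulr (N c : nat) : (forall n, f (n + N%:Z) = f n) ->
  \sum_(0 <= i < N * c) f i%:Z = (\sum_(0 <= i < N) f i%:Z) *+ c.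
Proof.
move=> fN; elim: c => [|c IH]; first by rewrite muln0 big_geq.
rewrite mulnS addnC (big_cat_nat _ (n := N * c)) ?leq_addr //= IH mulrS addrC.
congr (_ + _); rewrite -{1}[(N * c)%N]add0n big_addn addKn.
by apply: eq_bigr => i _; rewrite PoszD PoszM [_ * _]mulrC periodic_addMr.
Qed.

Lemma sum_any_period_eq0 (N P : nat) :
  (0 < N)%N -> (forall n, f (n + N%:Z) = f n) ->
  \sum_(0 <= i < N) f i%:Z = 0 -> (forall n, f (n + P%:Z) = f n) ->
  \sum_(0 <= i < P) f i%:Z = 0.
Proof.
move=> N_gt0 fN sumN0 fP.
have : (\sum_(0 <= i < P) f i%:Z) *+ N = 0.
  by rewrite -sum_periodic_mulr // mulnC sum_periodic_mulr // sumN0 mul0rn.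
by move/eqP; rewrite mulrn_eq0 gtn_eqF //= => /eqP.
Qed.

Lemma sum_periodic_flip_eq0 (N : nat) (L : int) : (0 < N)%N ->
  (forall n, f (n + N%:Z) = f n) -> (N%:Z %| L ^+ 2 - 1)%Z ->
  (forall n, f (L * n) = - f n) -> \sum_(0 <= i < N) f i%:Z = 0.
Proof.
move=> N_gt0 fN /dvdzP[q L_sqr] fL.
have N_neq0 : N%:Z != 0 by rewrite eqz_nat gtn_eqF.
have mod_lt x : (`|(x %% N%:Z)%Z| < N)%N.
  by have := modz_ge0 x N_neq0; have := @ltz_pmod x N; lia.
pose g (i : 'I_N) : 'I_N := Ordinal (mod_lt (L * i%:Z)).
have gE i : (g i)%:Z = (L * i%:Z %% N%:Z)%Z by rewrite /= gez0_abs ?modz_ge0.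
have gK : involutive g.
  move=> i; apply/val_inj/eqP; rewrite -eqz_nat !gE modzMmr mulrA -expr2.
  have -> : L ^+ 2 * i%:Z = q * i%:Z * N%:Z + i%:Z.
    by rewrite -[L ^+ 2](subrK 1) L_sqr; ring.
  by rewrite modzMDl modz_small // ltz_nat ltn_ord.
have sum_opp : \sum_(0 <= i < N) f i%:Z = - \sum_(0 <= i < N) f i%:Z.
  rewrite big_mkord -sumrN (reindex_inj (can_inj gK)) /=.
  by apply: eq_bigr => i _; rewrite gE -(periodic_modz fN) fL.
have : (\sum_(0 <= i < N) f i%:Z) *+ 2 == 0 by rewrite mulr2n {1}sum_opp addNr.
by rewrite mulrn_eq0 /= => /eqP.
Qed.

End PeriodicSums.

Lemma exists_flip_multiplier (t k : nat) : (0 < k)%N -> exists L : int,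
  [/\ (2 * 2 ^+ t %| L + 1)%Z, (3 %| L - 1)%Z
    & (12 * 2 ^+ t * k%:Z %| L ^+ 2 - 1)%Z].
Proof.
move=> k_gt0; have [m m_odd ->] := pfactor_coprime (isT : prime 2) k_gt0.
set c := logn 2 k.
have cop : coprimez (3 * m%:Z) (2 ^+ (t.+2 + c)).
  rewrite coprimezMl; apply/andP; split; apply: coprimezXr => //.
  by rewrite coprimezE coprime_sym.
have [L [L_minus1 L_plus1]] := coprimez_exists_pm1 cop.
have two_pow : 2 ^+ (t.+2 + c) = 2 * 2 ^+ t * (2 * 2 ^+ c) :> int.
  by rewrite exprD !exprS; ring.
exists L; split.
- by apply: dvdz_trans L_plus1; rewrite two_pow dvdz_mulr.
- by apply: dvdz_trans L_minus1; rewrite dvdz_mulr.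
have -> : L ^+ 2 - 1 = (L - 1) * (L + 1) by ring.
have -> : 12 * 2 ^+ t * (m * 2 ^ c)%N%:Z = 3 * m%:Z * 2 ^+ (t.+2 + c).
  by rewrite two_pow -natz natrM natrX !natz; ring.
exact: dvdz_mul.
Qed.

Lemma chiE t n : chi t n = chiw (2 ^+ t) n.
Proof.
rewrite /chi /chiw /chi_plus /chi_minus /= !eqz_mod_dvd !exprS.
have -> : 3 * (2 * 2 ^+ t) = 6 * 2 ^+ t :> int by ring.
have -> : 3 + 2 * (2 * 2 ^+ t) = 4 * 2 ^+ t + 3 :> int by ring.
by have -> : 2 * (2 * 2 ^+ t) - 3 = 4 * 2 ^+ t - 3 :> int by ring.
Qed.

Lemma twistedE t zeta n : twisted t zeta n = twistedw (2 ^+ t) zeta n.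
Proof.
rewrite /twisted /twistedw /expo /expw chiE !exprS.
suff -> : 3 * (2 * (2 * 2 ^+ t)) = 12 * 2 ^+ t :> int by [].
by ring.
Qed.

Theorem proposition2p2 (t : nat) (ht : (2 <= t)%N) :
  (forall n : int, chi t n != 0 ->
     (3 * 2 ^+ t.+2 %| n ^+ 2 - (2 ^+ t.+1 - 3) ^+ 2)%Z) /\
  (forall zeta : algC, (exists k : nat, (0 < k)%N /\ zeta ^+ k = 1) ->
     (exists P : nat, (0 < P)%N /\
        forall n : int, twisted t zeta (n + P%:Z) = twisted t zeta n) /\
     (forall P : nat, (0 < P)%N ->
        (forall n : int, twisted t zeta (n + P%:Z) = twisted t zeta n) ->
        \sum_(0 <= i < P) twisted t zeta i%:Z = 0)).
Proof.
set w : int := 2 ^+ t.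
have w_gt1 : 1 < w by rewrite exprn_egt1 // -lt0n (leq_trans _ ht).
have w_neq0 : w != 0 by rewrite gt_eqF // (lt_trans _ w_gt1).
have cop : coprimez 3 (2 * w) by rewrite coprimezMr coprimezXr.
split=> [n|zeta [k [k_gt0 zeta_k]]].
  rewrite chiE -/w => /dvdz_expw_num.
  have -> : 2 ^+ t.+1 = 2 * w by rewrite exprS.
  suff -> : 3 * 2 ^+ t.+2 = 12 * w by [].
  by rewrite !exprS -/w; ring.
have [L [L_plus1 L_minus1 L_sqr]] := exists_flip_multiplier t k_gt0.
pose N := (12 * 2 ^ t * k)%N.
have N_gt0 : (0 < N)%N by rewrite !muln_gt0 expn_gt0 k_gt0.
have NE : N%:Z = 12 * w * k%:Z by rewrite -natz !natrM natrX !natz.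
have twisted_per n : twisted t zeta (n + N%:Z) = twisted t zeta n.
  by rewrite !twistedE NE twistedw_periodic.
split=> [|P _ twisted_perP]; first by exists N.
apply: (sum_any_period_eq0 N_gt0 twisted_per _ twisted_perP).
apply: (sum_periodic_flip_eq0 N_gt0 twisted_per (L := L)); first by rewrite NE.
by move=> n; rewrite !twistedE (twistedw_mul w_neq0 k_gt0 zeta_k).
Qed.
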